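(* Let $\beta>0$, $C>0$, and let $\{a_j\}_{j\ge1}$ be a monotone non-increasing sequence with $0\le a_j\le C\,j^{-1-\beta}$ for all $j$. Then for any positive integers $k,m$ and any $\nu\in[1,1+\beta)$, $$\sum_{j=m}^\infty[a_j-a_{j+k}]\,j^\nu\le C\,k\,\frac{\beta+1}{\beta+1-\nu}\,m^{\nu-1-\beta}<\infty.$$ *)

From Stdlib Require Import Reals.
From Coquelicot Require Export Coquelicot.
Open Scope R_scope.

(** The telescoping case k = 1 is an Abel summation:
    sum_(j >= m) (a_j - a_(j+1)) j^nu = a_m m^nu + sum_(j > m) a_j (j^nu - (j-1)^nu).
    By the mean value theorem j^nu - (j-1)^nu <= nu j^(nu-1), so each term of the last sum is at
    most C nu j^(nu-2-beta) <= C nu/g ((j-1)^(-g) - j^(-g)) with g = 1+beta-nu > 0, which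
    telescopes to at most C nu/g m^(-g); with a_m m^nu <= C m^(-g) this gives C (beta+1)/g m^(-g).
    For general k, a_j - a_(j+k) is a sum of k consecutive differences, the i-th of which is a
    k = 1 sum starting at m+i with a larger weight (j+i)^nu, bounded by the k = 1 bound at m+i,
    hence at m. *)
From Stdlib Require Import Reals Lra Lia.
From Coquelicot Require Import Coquelicot.
Open Scope R_scope.

Lemma Rpower_gt_0 x p : 0 < Rpower x p.
Proof. apply exp_pos. Qed.

Lemma Rpower_le_nonpos_exp x y p : 0 < x <= y -> p <= 0 -> Rpower y p <= Rpower x p.
Proof.
  intros Hxy Hp.
  replace p with (- - p) by ring; rewrite (Rpower_Ropp y), (Rpower_Ropp x).
  apply Rinv_le_contravar; [apply Rpower_gt_0 | apply Rle_Rpower_l; lra].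
Qed.

Lemma Rpower_succ_sub_le x nu : 0 < x -> 1 <= nu ->
  Rpower (x + 1) nu - Rpower x nu <= nu * Rpower (x + 1) (nu - 1).
Proof.
  intros Hx Hnu.
  destruct (MVT_cor2 (fun t => Rpower t nu) (fun t => nu * Rpower t (nu - 1)) x (x + 1))
    as [c [Hmvt Hc]]; [lra | intros c Hc; apply derivable_pt_lim_power; lra |].
  rewrite Hmvt; replace (x + 1 - x) with 1 by ring; rewrite Rmult_1_r.
  apply Rmult_le_compat_l; [lra | apply Rle_Rpower_l; lra].
Qed.

Lemma Rpower_sub_succ_ge x g : 0 < x -> 0 < g ->
  g * Rpower (x + 1) (- g - 1) <= Rpower x (- g) - Rpower (x + 1) (- g).
Proof.
  intros Hx Hg.
  destruct (MVT_cor2 (fun t => Rpower t (- g)) (fun t => - g * Rpower t (- g - 1)) x (x + 1))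
    as [c [Hmvt Hc]]; [lra | intros c Hc; apply derivable_pt_lim_power; lra |].
  assert (Hcx : Rpower (x + 1) (- g - 1) <= Rpower c (- g - 1))
    by (apply Rpower_le_nonpos_exp; lra).
  replace (x + 1 - x) with 1 in Hmvt by ring.
  nra.
Qed.

Lemma series_nonneg_partial_sum_bound (b : nat -> R) (B : R) :
  (forall n, 0 <= b n) -> (forall N, sum_f_R0 b N <= B) ->
  ex_series b /\ Series b <= B.
Proof.
  intros Hb HB.
  assert (HsB : forall N, sum_n b N <= B) by (intros N; rewrite sum_n_Reals; apply HB).
  assert (Hincr : forall n, sum_n b n <= sum_n b (S n))
    by (intros n; rewrite !sum_n_Reals; simpl; specialize (Hb (S n)); lra).
  destruct (ex_finite_lim_seq_incr _ _ Hincr HsB) as [l Hl].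
  split; [exists l; exact Hl |].
  unfold Series; rewrite (is_lim_seq_unique _ _ Hl).
  exact (is_lim_seq_le _ _ l B HsB Hl (is_lim_seq_const B)).
Qed.

Section WeightedDifferences.

Variables (beta C nu : R) (a : nat -> R).
Hypotheses (hC : 0 <= C) (hnu1 : 1 <= nu) (hnu2 : nu < 1 + beta)
  (hmono : forall j, (1 <= j)%nat -> a (S j) <= a j)
  (hnonneg : forall j, (1 <= j)%nat -> 0 <= a j)
  (hbound : forall j, (1 <= j)%nat -> a j <= C * Rpower (INR j) (-1 - beta)).

Definition gap : R := 1 + beta - nu.

Lemma gap_gt_0 : 0 < gap.
Proof. unfold gap; lra. Qed.

Definition diff_sum (m k N : nat) : R :=
  sum_f_R0 (fun n => (a (n + m) - a (n + m + k)) * Rpower (INR (n + m)) nu) N.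

Definition diff_bound (m : nat) : R :=
  C * ((beta + 1) / (beta + 1 - nu)) * Rpower (INR m) (nu - 1 - beta).

Lemma a_le_shift j t : (1 <= j)%nat -> a (j + t)%nat <= a j.
Proof.
  intros Hj; induction t as [|t IH]; [rewrite Nat.add_0_r; lra |].
  rewrite Nat.add_succ_r; apply Rle_trans with (a (j + t)%nat); [apply hmono; lia | exact IH].
Qed.

Lemma diff_bound_antitone m m' : (1 <= m <= m')%nat -> diff_bound m' <= diff_bound m.
Proof.
  intros Hm; unfold diff_bound.
  apply Rmult_le_compat_l.
  - apply Rmult_le_pos; [lra | apply Rlt_le, Rdiv_lt_0_compat; lra].
  - apply Rpower_le_nonpos_exp; [split; [apply (lt_INR 0) | apply le_INR]; lia | lra].
Qed.

Lemma abel_step_le (M : nat) : (1 <= M)%nat ->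
  a (S M) * (Rpower (INR M + 1) nu - Rpower (INR M) nu)
  <= C * nu * (Rpower (INR M) (- gap) - Rpower (INR M + 1) (- gap)) / gap.
Proof.
  intros HM; set (x := INR M).
  assert (Hx : 0 < x) by (apply (lt_INR 0); lia).
  assert (Ha0 : 0 <= a (S M)) by (apply hnonneg; lia).
  assert (Hab : a (S M) <= C * Rpower (x + 1) (-1 - beta))
    by (unfold x; rewrite <- S_INR; apply hbound; lia).
  assert (Hexp : Rpower (x + 1) (-1 - beta) * Rpower (x + 1) (nu - 1) = Rpower (x + 1) (- gap - 1))
    by (rewrite <- Rpower_plus; f_equal; unfold gap; ring).
  pose proof (Rpower_succ_sub_le x nu Hx hnu1) as Hinc.
  pose proof (Rpower_sub_succ_ge x gap Hx gap_gt_0) as Hdec.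
  pose proof (Rpower_gt_0 (x + 1) (nu - 1)) as Hw.
  apply Rle_trans with (C * Rpower (x + 1) (-1 - beta) * (nu * Rpower (x + 1) (nu - 1))).
  - apply Rle_trans with (a (S M) * (nu * Rpower (x + 1) (nu - 1))).
    + apply Rmult_le_compat_l; lra.
    + apply Rmult_le_compat_r; nra.
  - replace (C * Rpower (x + 1) (-1 - beta) * (nu * Rpower (x + 1) (nu - 1)))
      with (C * nu * (gap * Rpower (x + 1) (- gap - 1)) / gap)
      by (rewrite <- Hexp; field; apply Rgt_not_eq, gap_gt_0).
    unfold Rdiv; apply Rmult_le_compat_r; [apply Rlt_le, Rinv_0_lt_compat, gap_gt_0 |].
    apply Rmult_le_compat_l; nra.
Qed.

(** The boundary term of the Abel summation is kept on the left so that the induction closes. *)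
Lemma diff_sum_1_abel m N : (1 <= m)%nat ->
  diff_sum m 1 N + a (S (N + m)) * Rpower (INR (N + m)) nu
  <= C * Rpower (INR m) (nu - 1 - beta)
     + C * nu * (Rpower (INR m) (- gap) - Rpower (INR (N + m)) (- gap)) / gap.
Proof.
  intros Hm; unfold diff_sum.
  induction N as [|N IH].
  - simpl sum_f_R0; rewrite ?Nat.add_0_l, Nat.add_1_r, Rminus_diag.
    pose proof (hbound m Hm) as Ham.
    pose proof (Rpower_gt_0 (INR m) nu) as Hw.
    replace (nu - 1 - beta) with (-1 - beta + nu) by ring; rewrite Rpower_plus.
    unfold Rdiv; rewrite Rmult_0_r, Rmult_0_l, Rplus_0_r.
    pose proof (Rmult_le_compat_r _ _ _ (Rlt_le _ _ Hw) Ham); lra.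
  - rewrite tech5.
    replace (S N + m + 1)%nat with (S (S (N + m))) by lia.
    replace (S N + m)%nat with (S (N + m)) by lia.
    rewrite S_INR.
    pose proof (abel_step_le (N + m) ltac:(lia)) as Hstep.
    replace (C * nu * (Rpower (INR m) (- gap) - Rpower (INR (N + m) + 1) (- gap)) / gap)
      with (C * nu * (Rpower (INR m) (- gap) - Rpower (INR (N + m)) (- gap)) / gap
            + C * nu * (Rpower (INR (N + m)) (- gap) - Rpower (INR (N + m) + 1) (- gap)) / gap)
      by (field; apply Rgt_not_eq, gap_gt_0).
    lra.
Qed.

Lemma diff_sum_1_le m N : (1 <= m)%nat -> diff_sum m 1 N <= diff_bound m.
Proof.
  intros Hm.
  pose proof (diff_sum_1_abel m N Hm) as Habel.
  assert (Hrem : 0 <= a (S (N + m)) * Rpower (INR (N + m)) nu)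
    by (apply Rmult_le_pos; [apply hnonneg; lia | apply Rlt_le, Rpower_gt_0]).
  assert (Htail : 0 <= C * nu * Rpower (INR (N + m)) (- gap) / gap)
    by (apply Rmult_le_pos; [apply Rmult_le_pos; [nra | apply Rlt_le, Rpower_gt_0]
                           | apply Rlt_le, Rinv_0_lt_compat, gap_gt_0]).
  replace (diff_bound m)
    with (C * Rpower (INR m) (nu - 1 - beta) + C * nu * Rpower (INR m) (- gap) / gap)
    by (unfold diff_bound, gap; replace (- (1 + beta - nu)) with (nu - 1 - beta) by ring;
        field; lra).
  unfold Rdiv in *; lra.
Qed.

Lemma diff_sum_succ_le m k N : (1 <= m)%nat ->
  diff_sum m (S k) N <= diff_sum m k N + diff_sum (m + k) 1 N.
Proof.
  intros Hm; unfold diff_sum; rewrite <- sum_plus.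
  apply sum_Rle; intros n _.
  replace (n + m + S k)%nat with (n + (m + k) + 1)%nat by lia.
  replace (n + m + k)%nat with (n + (m + k))%nat by lia.
  assert (Hdiff : 0 <= a (n + (m + k))%nat - a (n + (m + k) + 1)%nat)
    by (rewrite Nat.add_1_r; pose proof (hmono (n + (m + k)) ltac:(lia)); lra).
  assert (Hw : Rpower (INR (n + m)) nu <= Rpower (INR (n + (m + k))) nu)
    by (apply Rle_Rpower_l; [lra | split; [apply (lt_INR 0) | apply le_INR]; lia]).
  nra.
Qed.

Lemma diff_sum_le m k N : (1 <= m)%nat -> diff_sum m k N <= INR k * diff_bound m.
Proof.
  intros Hm; induction k as [|k IH].
  - unfold diff_sum; rewrite Rmult_0_l.
    apply Req_le, sum_eq_R0; intros n _; rewrite Nat.add_0_r; ring.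
  - pose proof (diff_sum_1_le (m + k) N ltac:(lia)) as H1.
    pose proof (diff_bound_antitone m (m + k) ltac:(lia)) as Hanti.
    pose proof (diff_sum_succ_le m k N Hm).
    rewrite S_INR; lra.
Qed.

Lemma diff_sum_term_ge_0 m k n : (1 <= m)%nat ->
  0 <= (a (n + m) - a (n + m + k)) * Rpower (INR (n + m)) nu.
Proof.
  intros Hm; apply Rmult_le_pos; [| apply Rlt_le, Rpower_gt_0].
  pose proof (a_le_shift (n + m) k ltac:(lia)); lra.
Qed.

End WeightedDifferences.

Theorem lemma1p9 (beta C : R) (a : nat -> R)
  (hbeta : 0 < beta) (hC : 0 < C)
  (hmono : forall j : nat, (1 <= j)%nat -> a (S j) <= a j)
  (hnonneg : forall j : nat, (1 <= j)%nat -> 0 <= a j)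
  (hbound : forall j : nat, (1 <= j)%nat -> a j <= C * Rpower (INR j) (-1 - beta))
  (k m : nat) (hk : (1 <= k)%nat) (hm : (1 <= m)%nat)
  (nu : R) (hnu1 : 1 <= nu) (hnu2 : nu < 1 + beta) :
  ex_series (fun n : nat => (a (n + m)%nat - a (n + m + k)%nat) * Rpower (INR (n + m)) nu)
  /\ Series (fun n : nat => (a (n + m)%nat - a (n + m + k)%nat) * Rpower (INR (n + m)) nu)
     <= C * INR k * ((beta + 1) / (beta + 1 - nu)) * Rpower (INR m) (nu - 1 - beta).
Proof.
  apply series_nonneg_partial_sum_bound.
  - intros n; exact (diff_sum_term_ge_0 nu a hmono m k n hm).
  - intros N.
    pose proof (diff_sum_le beta C nu a (Rlt_le _ _ hC) hnu1 hnu2 hmono hnonneg hbound m k N hm).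
    unfold diff_sum, diff_bound in *; lra.
Qed.
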